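(* Let $\mathcal{X}$ be an input space, $P$ a real normed vector space (the parameter space) with norm $\|\cdot\|$, and $\mathcal{T}:\mathcal{X}\times P\to\mathcal{X}$ a transformation satisfying $\mathcal{T}(x,0)=x$ and $\mathcal{T}(\mathcal{T}(x,\theta_1),\theta_2)=\mathcal{T}(x,\theta_1+\theta_2)$ for all $x\in\mathcal{X}$, $\theta_1,\theta_2\in P$. Define $d_{\mathcal{T}}(x_1,x_2)=\min\{\|\theta\| : \mathcal{T}(x_1,\theta)=x_2\}$ if some $\theta$ with $\mathcal{T}(x_1,\theta)=x_2$ exists, and $d_{\mathcal{T}}(x_1,x_2)=\infty$ otherwise. Let $\mathcal{Q}(0)$ be a probability distribution on $P$, and for $\theta\in P$ let $\mathcal{Q}(\theta)$ be the distribution of $\theta+\delta$ with $\delta\sim\mathcal{Q}(0)$; assume $\mathrm{TV}(\mathcal{Q}(0),\mathcal{Q}(\theta))\le\psi(\|\theta\|)$ for all $\theta\in P$, for a concave function $\psi$. Define the smoothing distribution $\mathcal{S}(x)$ as the distribution of $\mathcal{T}(x,\delta)$ with $\delta\sim\mathcal{Q}(0)$. Then for any $x_1,x_2\in\mathcal{X}$ with $d_{\mathcal{T}}(x_1,x_2)$ finite, \[\mathrm{TV}(\mathcal{S}(x_1),\mathcal{S}(x_2))\le \psi(d_{\mathcal{T}}(x_1,x_2)).\]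
   Context: $\mathrm{TV}$ denotes the total variation distance between probability distributions. *)

From HB Require Import structures.
From mathcomp Require Import all_boot all_order all_algebra.
From mathcomp Require Import all_classical all_reals all_analysis.
Set Implicit Arguments. Unset Strict Implicit. Unset Printing Implicit Defensive.
Import Order.TTheory GRing.Theory Num.Theory.
Import numFieldNormedType.Exports.
Local Open Scope classical_set_scope.
Local Open Scope ring_scope.

Definition TV d (T : measurableType d) (R : realType)
  (mu nu : set T -> \bar R) : \bar R :=
  ereal_sup [set `|(mu A - nu A)%E|%E | A in [set A : set T | measurable A]].

(* [is_dT T x1 x2 r] : d_T(x1,x2) is finite and equals r, i.e.
   r = min { ||theta|| : T(x1,theta) = x2 } and this minimum exists. *)
Definition is_dT (R : realType) (P : normedModType R) (X : Type)
  (T : X -> P -> X) (x1 x2 : X) (r : R) : Prop :=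
  (exists theta : P, T x1 theta = x2 /\ `|theta| = r) /\
  (forall theta : P, T x1 theta = x2 -> r <= `|theta|).

Definition concave_on_nonneg (R : realType) (psi : R -> R) : Prop :=
  forall (a b t : R), 0 <= a -> 0 <= b -> 0 <= t -> t <= 1 ->
    t * psi a + (1 - t) * psi b <= psi (t * a + (1 - t) * b).

From HB Require Import structures.
From mathcomp Require Import all_boot all_order all_algebra.
From mathcomp Require Import all_classical all_reals all_analysis.
Import Order.TTheory GRing.Theory Num.Theory.
Import numFieldNormedType.Exports.
Local Open Scope classical_set_scope.
Local Open Scope ring_scope.

(* If T(x1, th) = x2 then T(x2, delta) = T(x1, th + delta), so S(x2) is the
   image of Q(th) under T(x1, .) while S(x1) is the image of Q(0).  Total
   variation cannot increase under a measurable map, hence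
   TV(S(x1), S(x2)) <= TV(Q(0), Q(th)) <= psi(|th|) = psi(d_T(x1, x2)). *)

Lemma TV_pushforward_le {d1 d2} {T1 : measurableType d1}
    {T2 : measurableType d2} {R : realType}
    (mu nu : set T1 -> \bar R) {f : T1 -> T2} :
  measurable_fun [set: T1] f ->
  (TV (pushforward mu f) (pushforward nu f) <= TV mu nu)%E.
Proof.
move=> mf; apply: ge_ereal_sup => _ [A mA <-].
apply: ereal_sup_ubound; exists (f @^-1` A) => //.
by rewrite -[_ @^-1` _]setTI; exact: mf.
Qed.

Lemma pushforward_action_shift (R : realType) (P : normedModType R)
    (G : set (set P)) d (X : measurableType d) (T : X -> P -> X)
    (Tadd : forall x th1 th2, T (T x th1) th2 = T x (th1 + th2))
    (mu : set (g_sigma_algebraType G) -> \bar R) (x : X) (th : P) :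
  pushforward mu (T (T x th)) =
  pushforward (pushforward mu (fun delta : g_sigma_algebraType G =>
                 (th + delta)%R : g_sigma_algebraType G)) (T x).
Proof.
apply/funext => A; rewrite /pushforward; congr mu.
by apply/seteqP; split => z /=; rewrite Tadd.
Qed.

Theorem lemma1 (R : realType) (P : normedModType R) (G : set (set P))
  (dX : measure_display) (X : measurableType dX)
  (T : X -> P -> X)
  (T0 : forall x, T x 0 = x)
  (Tadd : forall x th1 th2, T (T x th1) th2 = T x (th1 + th2))
  (Q0 : probability (g_sigma_algebraType G) R)
  (Tmeas : forall x : X, measurable_fun [set: g_sigma_algebraType G] (T x))
  (trans_meas : forall th : P,
     measurable_fun [set: g_sigma_algebraType G]
       (fun delta : g_sigma_algebraType G => (th + delta)%R : g_sigma_algebraType G))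
  (psi : R -> R) (psi_concave : concave_on_nonneg psi)
  (hQ : forall th : P,
     (TV Q0 (pushforward Q0 (fun delta : g_sigma_algebraType G =>
                 (th + delta)%R : g_sigma_algebraType G))
      <= (psi `|th|)%:E)%E)
  (x1 x2 : X) (r : R) (hd : is_dT T x1 x2 r) :
  (TV (pushforward Q0 (T x1)) (pushforward Q0 (T x2)) <= (psi r)%:E)%E.
Proof.
case: hd => [[th [<- <-]] _].
rewrite pushforward_action_shift //.
apply: le_trans (TV_pushforward_le _ _ (Tmeas x1)) _.
exact: hQ.
Qed.
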